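(* Let $R\ge1$, let $G$ be an observable of $R$ replicas, and let $0<\beta_1<\beta_2$. Then, in the thermodynamic limit $|\Lambda|\to\infty$, $\int_{\beta_1}^{\beta_2}\Delta_1 G\, d\beta \to 0$, where $$\Delta_1 G=\sum_{l=1}^{R}\mathrm{Av}\Big(\Omega_R[h(\sigma^{(l)})\,G]-\Omega_R[h(\sigma^{(l)})]\,\Omega_R[G]\Big),\qquad h(\sigma)=H_\Lambda(\sigma)/|\Lambda|.$$
   Context: For each finite $d$-dimensional parallelepiped $\Lambda\subset\mathbb{Z}^d$ let $\Sigma_\Lambda=\{-1,1\}^\Lambda$, and for $X\subset\Lambda$ let $\sigma_X=\prod_{i\in X}\sigma_i$ (with $\sigma_\emptyset=0$). Let $\{J_X\}$ be independent centered Gaussian random variables with variances $\mathrm{Av}(J_X^2)=\Delta_X^2$, translation invariant, where $\mathrm{Av}$ denotes expectation over the $J$'s. The Hamiltonian is $H_\Lambda(\sigma)=-\sum_{X\subset\Lambda}J_X\sigma_X$, with normalized covariance $c_\Lambda(\sigma,\tau)=\frac{1}{|\Lambda|}\sum_{X\subset\Lambda}\Delta_X^2\sigma_X\tau_X$. Let $\mathcal{Z}(\beta)=\sum_{\sigma\in\Sigma_\Lambda}e^{-\beta H_\Lambda(\sigma)}$ and the $R$-replica random Gibbs state $\Omega_R(f)=\sum_{\sigma^{(1)},\dots,\sigma^{(R)}}f\,e^{-\beta\sum_{i=1}^R H_\Lambda(\sigma^{(i)})}/\mathcal{Z}(\beta)^R$. An observable of $R$ replicas is a smooth function $G$ of an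 $R\times R$ real matrix with $|G|\le 1$, evaluated at $(c_\Lambda(\sigma^{(k)},\sigma^{(l)}))_{k,l\le R}$. The thermodynamic limit is the limit along boxes $\Lambda$ with $|\Lambda|\to\infty$. *)

From HB Require Import structures.
From mathcomp Require Import all_boot all_order all_algebra finmap.
From mathcomp Require Import all_classical all_reals all_analysis.
Set Implicit Arguments. Unset Strict Implicit. Unset Printing Implicit Defensive.
Import Order.TTheory GRing.Theory Num.Theory.
Import numFieldNormedType.Exports.
Local Open Scope classical_set_scope.
Local Open Scope ring_scope.

Definition site (d : nat) := 'rV[int]_d.

Definition translate d (v : site d) (X : {fset site d}) : {fset site d} :=
  [fset (x + v)%R | x in X]%fset.

(* A d-dimensional parallelepiped Lambda = prod_i [a_i, a_i + L_i) of Z^d is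
   given by a corner a and side lengths L; [box L] is its finite type of
   points, written relative to the corner. *)
Definition box d (L : 'I_d -> nat) := {dffun forall i : 'I_d, 'I_(L i)}.

Definition pos d (a : 'I_d -> int) (L : 'I_d -> nat) (x : box L) : site d :=
  \row_i (a i + (x i : nat)%:Z).

Definition sites d (a : 'I_d -> int) (L : 'I_d -> nat) (X : {set box L})
  : {fset site d} := [fset pos a x | x in enum X]%fset.

(* Sigma_Lambda = {-1,1}^Lambda, a spin being encoded by a boolean *)
Definition config d (L : 'I_d -> nat) := {ffun box L -> bool}.

Definition spin {R : realType} d (L : 'I_d -> nat) (s : config L) (i : box L)
  : R := if s i then 1 else -1.

(* sigma_X = prod_{i in X} sigma_i, with the convention sigma_emptyset = 0 *)
Definition sigmaX {R : realType} d (L : 'I_d -> nat) (X : {set box L})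
  (s : config L) : R :=
  if X == finset.set0 then 0 else \prod_(i in X) spin s i.

(* normalized covariance c_Lambda(sigma, tau), Delta X ^+ 2 = Av(J_X^2) *)
Definition cov {R : realType} d (a : 'I_d -> int) (L : 'I_d -> nat)
  (Delta : {fset site d} -> R) (s t : config L) : R :=
  (#|box L|%:R)^-1 *
    \sum_(X : {set box L}) Delta (sites a X) ^+ 2 * sigmaX X s * sigmaX X t.

Definition Ham {R : realType} {T : Type} d (a : 'I_d -> int) (L : 'I_d -> nat)
  (J : {fset site d} -> T -> R) (w : T) (s : config L) : R :=
  - \sum_(X : {set box L}) J (sites a X) w * sigmaX X s.

Definition hdens {R : realType} {T : Type} d (a : 'I_d -> int)
  (L : 'I_d -> nat) (J : {fset site d} -> T -> R) (w : T) (s : config L) : R :=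
  Ham a J w s / (#|box L|%:R).

Definition Zpart {R : realType} {T : Type} d (a : 'I_d -> int)
  (L : 'I_d -> nat) (J : {fset site d} -> T -> R) (w : T) (beta : R) : R :=
  \sum_(s : config L) expR (- beta * Ham a J w s).

Definition replicas (n : nat) d (L : 'I_d -> nat) := {ffun 'I_n -> config L}.

Definition Omega {R : realType} {T : Type} (n : nat) d (a : 'I_d -> int)
  (L : 'I_d -> nat) (J : {fset site d} -> T -> R) (w : T) (beta : R)
  (f : replicas n L -> R) : R :=
  (\sum_(S : replicas n L)
      f S * expR (- beta * \sum_(k < n) Ham a J w (S k)))
  / (Zpart a L J w beta) ^+ n.

Definition covmx {R : realType} (n : nat) d (a : 'I_d -> int)
  (L : 'I_d -> nat) (Delta : {fset site d} -> R) (S : replicas n L)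
  : 'M[R]_n := \matrix_(k, l) cov a Delta (S k) (S l).

Definition Av {R : realType} (dT : measure_display) (T : measurableType dT)
  (P : probability T R) (F : T -> R) : R := fine ('E_P[F])%E.

(* X is a centered Gaussian random variable with standard deviation s >= 0
   (variance s^2); for s = 0 this is the Dirac mass at 0 *)
Definition centered_gaussian {R : realType} (dT : measure_display)
  (T : measurableType dT) (P : probability T R) (X : T -> R) (s : R) : Prop :=
  measurable_fun setT X /\
  forall B : set R, measurable B ->
    P (X @^-1` B) = (if s == 0 then \d_(0 : R) B else normal_prob 0 s B).

Definition mutually_independent {R : realType} (dT : measure_display)
  (T : measurableType dT) (P : probability T R) (I : choiceType)
  (X : I -> T -> R) : Prop :=
  forall (S : {fset I}) (B : I -> set R), (forall i, measurable (B i)) ->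
    P (\bigcap_(i in [set` S]) (X i @^-1` B i)) =
    (\prod_(i <- S) P (X i @^-1` B i))%E.

(* C^k (k-times continuously differentiable, via continuous iterated
   directional derivatives) and smooth (C^infinity) functions *)
Fixpoint Ck {R : realType} (V : normedModType R) (k : nat) (f : V -> R)
  : Prop :=
  match k with
  | 0 => continuous f
  | k'.+1 => continuous f /\ (forall x v : V, derivable f x v) /\
             (forall v : V, Ck k' (fun x => derive f x v))
  end.

Definition smooth {R : realType} (V : normedModType R) (f : V -> R) : Prop :=
  forall k, Ck k f.

Definition observable {R : realType} (n : nat) (G : 'M[R]_n -> R) : Prop :=
  smooth G /\ forall M, `|G M| <= 1.

Definition Delta1 {R : realType} (dT : measure_display) (T : measurableType dT)
  (P : probability T R) d (J : {fset site d} -> T -> R)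
  (Delta : {fset site d} -> R) (n : nat) (G : 'M[R]_n -> R)
  (a : 'I_d -> int) (L : 'I_d -> nat) (beta : R) : R :=
  \sum_(l < n) Av P (fun w =>
     Omega a J w beta (fun S : replicas n L => hdens a J w (S l) * G (covmx a Delta S))
   - Omega a J w beta (fun S : replicas n L => hdens a J w (S l))
     * Omega a J w beta (fun S : replicas n L => G (covmx a Delta S))).

(* For fixed couplings, Omega_R is the Gibbs state of the replicated energy
   E(S) = sum_l H(S l), and d/dbeta <G> = -<G; E> = -|Lambda| sum_l <h(S l); G>.
   Hence Delta_1 G = -(1/|Lambda|) d/dbeta Av <G>, so its integral over
   [beta1, beta2] is -(1/|Lambda|) times an increment of Av <G>, which |G| <= 1
   bounds by 2/|Lambda|.  Exchanging Av with d/dbeta is dominated convergence: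
   for beta > 0 the truncated correlation of a bounded observable with the
   energy is at most 2 #configurations / beta, since x exp(-beta x) <= 1/beta
   for the energy x above the ground state. *)

From HB Require Import structures.
From mathcomp Require Import all_boot all_order all_algebra finmap.
From mathcomp Require Import all_classical all_reals all_analysis.
From mathcomp Require Import measurable_realfun ring lra.
Set Implicit Arguments. Unset Strict Implicit. Unset Printing Implicit Defensive.
Import Order.TTheory GRing.Theory Num.Theory.
Import numFieldNormedType.Exports.
Local Open Scope classical_set_scope.
Local Open Scope ring_scope.

Section Calculus.
Variable R : realType.
Implicit Types (b k x : R).

Lemma is_derive_sum_seq (I : Type) (r : seq I) (h : I -> R -> R) (dh : I -> R) x :
  (forall i, is_derive x 1 (h i) (dh i)) ->
  is_derive x 1 (fun y => \sum_(i <- r) h i y) (\sum_(i <- r) dh i).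
Proof.
move=> h_dh; rewrite -fct_sumE.
by elim/big_ind2: _ => // *; [exact: is_derive_cst | exact: is_deriveD].
Qed.

Lemma is_derive_expRM k b :
  is_derive b 1 (fun x => expR (- x * k)) (- k * expR (- b * k)).
Proof.
have lin : is_derive b 1 (fun x => - x * k) (- k).
  have := is_deriveM (is_deriveNid b 1) (is_derive_cst k b 1).
  by move/is_derive_eq; apply; rewrite scaler0 add0r /GRing.scale /= mulrN1.
by rewrite mulrC; exact: (is_derive1_comp (f := expR)).
Qed.

End Calculus.

Section GibbsState.
Variables (R : realType) (C : finType) (E : C -> R).
Implicit Types (b x : R) (f g : C -> R) (s : C).

Definition partition_fun b : R := \sum_s expR (- b * E s).
Definition gibbs_weight b s : R := expR (- b * E s) / partition_fun b.
Definition gibbs b f : R := \sum_s f s * gibbs_weight b s.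
Definition gibbs_cov b f g : R :=
  gibbs b (fun s => f s * g s) - gibbs b f * gibbs b g.

Lemma partition_fun_gt0 b s : 0 < partition_fun b.
Proof.
rewrite /partition_fun (bigD1 s) //= ltr_pwDl ?expR_gt0 //.
by apply: sumr_ge0 => t _; rewrite ltW ?expR_gt0.
Qed.

Lemma gibbs_weight_gt0 b s : 0 < gibbs_weight b s.
Proof. by rewrite divr_gt0 ?expR_gt0 ?(partition_fun_gt0 b s). Qed.

Lemma gibbs_weight_le b s t : gibbs_weight b s <= expR (- (b * (E s - E t))).
Proof.
have Zt : expR (- b * E t) <= partition_fun b.
  rewrite /partition_fun (bigD1 t) //= lerDl.
  by apply: sumr_ge0 => u _; rewrite ltW ?expR_gt0.
rewrite /gibbs_weight ler_pdivrMr ?(partition_fun_gt0 b s) //.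
apply: le_trans (ler_wpM2l (ltW (expR_gt0 _)) Zt).
by rewrite -expRD (_ : _ + _ = - b * E s) //; ring.
Qed.

(* s0 only witnesses that C is nonempty. *)
Lemma sum_gibbs_weight b s0 : \sum_s gibbs_weight b s = 1.
Proof. by rewrite -mulr_suml divff // gt_eqF ?(partition_fun_gt0 b s0). Qed.

Lemma eq_gibbs b f g : f =1 g -> gibbs b f = gibbs b g.
Proof. by move=> fg; apply: eq_bigr => s _; rewrite fg. Qed.

Lemma gibbsD b f g : gibbs b (fun s => f s + g s) = gibbs b f + gibbs b g.
Proof. by rewrite -big_split; apply: eq_bigr => s _; rewrite mulrDl. Qed.

Lemma gibbsZ b x f : gibbs b (fun s => x * f s) = x * gibbs b f.
Proof. by rewrite mulr_sumr; apply: eq_bigr => s _; rewrite mulrA. Qed.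

Lemma gibbs_sum b (I : Type) (r : seq I) (F : I -> C -> R) :
  gibbs b (fun s => \sum_(i <- r) F i s) = \sum_(i <- r) gibbs b (F i).
Proof.
rewrite /gibbs (exchange_big_dep xpredT) //=.
by apply: eq_bigr => s _; rewrite mulr_suml.
Qed.

Lemma gibbs_cst b s0 x : gibbs b (fun _ => x) = x.
Proof. by rewrite /gibbs -mulr_sumr (sum_gibbs_weight b s0) mulr1. Qed.

Lemma ler_gibbs b f g : (forall s, f s <= g s) -> gibbs b f <= gibbs b g.
Proof.
move=> fg; rewrite /gibbs; apply: ler_sum => s _.
by apply: ler_wpM2r; [exact/ltW/gibbs_weight_gt0 | exact: fg].
Qed.

Lemma ler_norm_gibbs b f : `|gibbs b f| <= gibbs b (fun s => `|f s|).
Proof.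
rewrite /gibbs; apply: le_trans (ler_norm_sum _ _ _) _; apply: ler_sum => s _.
by rewrite normrM (gtr0_norm (gibbs_weight_gt0 b s)).
Qed.

Lemma gibbs_norm_le1 b s0 f : (forall s, `|f s| <= 1) -> `|gibbs b f| <= 1.
Proof.
move=> f1; rewrite -(gibbs_cst b s0 1).
exact: le_trans (ler_norm_gibbs b f) (ler_gibbs b f1).
Qed.

Lemma gibbs_cov_shiftl b s0 f g c :
  gibbs_cov b (fun s => f s - c) g = gibbs_cov b f g.
Proof.
rewrite /gibbs_cov /=.
have -> : gibbs b (fun s => (f s - c) * g s) =
          gibbs b (fun s => f s * g s) + - c * gibbs b g.
  by rewrite -gibbsZ -gibbsD; apply: eq_gibbs => s; ring.
have -> : gibbs b (fun s => f s - c) = gibbs b f + - c.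
  by rewrite -[X in _ + X](gibbs_cst b s0) -gibbsD.
by ring.
Qed.

Lemma gibbs_cov_suml b (I : Type) (r : seq I) (F : I -> C -> R) g :
  gibbs_cov b (fun s => \sum_(i <- r) F i s) g = \sum_(i <- r) gibbs_cov b (F i) g.
Proof.
rewrite /gibbs_cov sumrB -big_distrl /= -!gibbs_sum; congr (_ - _).
by apply: eq_gibbs => s; rewrite mulr_suml.
Qed.

Lemma gibbs_covZl b x f g :
  gibbs_cov b (fun s => x * f s) g = x * gibbs_cov b f g.
Proof.
rewrite /gibbs_cov (eq_gibbs b (g := fun s => x * (f s * g s))).
  by rewrite !gibbsZ mulrBr mulrA.
by move=> s; rewrite mulrA.
Qed.

Lemma gibbs_covC b f g : gibbs_cov b f g = gibbs_cov b g f.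
Proof.
by rewrite /gibbs_cov mulrC; congr (_ - _); apply: eq_gibbs => s; rewrite mulrC.
Qed.

Lemma norm_gibbs_cov_le b s0 f g : (forall s, 0 <= f s) ->
  (forall s, `|g s| <= 1) -> `|gibbs_cov b f g| <= 2 * gibbs b f.
Proof.
move=> f_ge0 g1.
have gibbs_f_ge0 : 0 <= gibbs b f.
  by apply: sumr_ge0 => s _; rewrite mulr_ge0 ?f_ge0 ?ltW ?gibbs_weight_gt0.
have fg_le : `|gibbs b (fun s => f s * g s)| <= gibbs b f.
  apply: le_trans (ler_norm_gibbs _ _) (ler_gibbs _ _) => s.
  by rewrite normrM ger0_norm ?f_ge0 // ler_piMr ?f_ge0.
have f_g_le : `|gibbs b f * gibbs b g| <= gibbs b f.
  by rewrite normrM ger0_norm // ler_piMr ?(gibbs_norm_le1 b s0).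
by apply: le_trans (ler_normB _ _) _; lra.
Qed.

Lemma le_mul_expRN b x : 0 < b -> x * expR (- (b * x)) <= b^-1.
Proof.
move=> b_gt0; rewrite expRN ler_pdivrMr ?expR_gt0 //.
rewrite -[X in X <= _](mulKf (lt0r_neq0 b_gt0)).
apply: ler_wpM2l; first by rewrite invr_ge0 ltW.
by apply: le_trans (expR_ge1Dx _); lra.
Qed.

Lemma gibbs_excess_le b s0 : 0 < b -> (forall s, E s0 <= E s) ->
  gibbs b (fun s => E s - E s0) <= #|C|%:R / b.
Proof.
move=> b_gt0 s0_min; rewrite mulr_natl -sumr_const; apply: ler_sum => s _.
apply: le_trans (le_mul_expRN (E s - E s0) b_gt0).
by rewrite ler_wpM2l ?subr_ge0 ?s0_min ?gibbs_weight_le.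
Qed.

Lemma norm_gibbs_cov_excess_le b s0 f g c : 0 < b ->
  (forall s, 0 <= f s - c <= E s - E s0) -> (forall s, `|g s| <= 1) ->
  `|gibbs_cov b f g| <= 2 * #|C|%:R / b.
Proof.
move=> b_gt0 f_bnd g1; rewrite -(gibbs_cov_shiftl b s0 _ _ c) -mulrA.
apply: le_trans (norm_gibbs_cov_le b s0 _ g1) _ => [s|]; first by case/andP: (f_bnd s).
rewrite ler_pM2l // (le_trans (ler_gibbs b (g := fun s => E s - E s0) _)) //.
  by move=> s; case/andP: (f_bnd s).
apply: gibbs_excess_le => // s; rewrite -subr_ge0.
by case/andP: (f_bnd s) => /le_trans; apply.
Qed.

End GibbsState.

Section GibbsDerivative.
Variables (R : realType) (C : finType) (E : C -> R).
Implicit Types (b : R) (f g : C -> R) (s : C).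

Lemma partition_fun_gibbs_energy b :
  partition_fun E b * gibbs E b E = \sum_s E s * expR (- b * E s).
Proof.
rewrite /gibbs mulr_sumr; apply: eq_bigr => s _.
by rewrite /gibbs_weight; field; exact: lt0r_neq0 (partition_fun_gt0 E b s).
Qed.

Lemma is_derive_partition_fun b :
  is_derive b 1 (partition_fun E) (- (partition_fun E b * gibbs E b E)).
Proof.
rewrite partition_fun_gibbs_energy -sumrN; apply: is_derive_sum_seq => s.
by rewrite -mulNr; exact: is_derive_expRM.
Qed.

Lemma is_derive_gibbs_weight b s : is_derive b 1 (gibbs_weight E ^~ s)
  ((gibbs E b E - E s) * gibbs_weight E b s).
Proof.
have Z_neq0 := lt0r_neq0 (partition_fun_gt0 E b s).
have := is_deriveM (is_derive_expRM (E s) b)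
                   (is_deriveV Z_neq0 (is_derive_partition_fun b)).
by move/is_derive_eq; apply; rewrite /gibbs_weight /GRing.scale /=; field.
Qed.

Lemma is_derive_gibbs b f : is_derive b 1 (gibbs E ^~ f) (- gibbs_cov E b f E).
Proof.
have := is_derive_sum_seq (index_enum C)
  (fun s => is_deriveZ (f s) (is_derive_gibbs_weight b s)).
move/is_derive_eq; apply.
rewrite /gibbs_cov opprB [_ * gibbs E b E]mulrC -gibbsZ /gibbs -sumrB.
by apply: eq_bigr => s _; rewrite /GRing.scale /=; ring.
Qed.

Lemma gibbs_continuous f : continuous (gibbs E ^~ f).
Proof.
move=> b; have [gibbs_derivable _] := is_derive_gibbs b f.
exact/differentiable_continuous/derivable1_diffP.
Qed.

Lemma gibbs_cov_continuous f g : continuous (fun b => gibbs_cov E b f g).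
Proof.
have -> : (fun b => gibbs_cov E b f g) = gibbs E ^~ (fun s => f s * g s)
                                      - (gibbs E ^~ f) * (gibbs E ^~ g) by [].
by move=> b; apply: continuousB; last apply: continuousM; exact: gibbs_continuous.
Qed.

End GibbsDerivative.

Section Replicas.
Variables (R : realType) (C : finType) (E : C -> R) (n : nat).
Implicit Types (b : R) (S : {ffun 'I_n -> C}).

Definition replica_energy S : R := \sum_(k < n) E (S k).

Lemma partition_fun_replica b :
  partition_fun replica_energy b = partition_fun E b ^+ n.
Proof.
rewrite /partition_fun -[in RHS](card_ord n) -prodr_const.
rewrite (bigA_distr_bigA (fun (k : 'I_n) s => expR (- b * E s))).
by apply: eq_bigr => S _; rewrite /replica_energy mulr_sumr expR_sum.
Qed.

Lemma exists_ground_state (c : C) : exists s0, forall s, E s0 <= E s.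
Proof.
exists [arg min_(s0 < c) E s0]%O => s.
by case: (Order.TotalTheory.arg_minP (P := xpredT)) => // s0 _; apply.
Qed.

Lemma replica_energy_excess s0 S l : (forall s, E s0 <= E s) ->
  0 <= E (S l) - E s0 <= replica_energy S - replica_energy [ffun=> s0].
Proof.
move=> s0_min; rewrite subr_ge0 s0_min /replica_energy -sumrB.
rewrite (bigD1 l) //= ffunE lerDl; apply: sumr_ge0 => k _.
by rewrite ffunE subr_ge0.
Qed.

Lemma replica_energy_ground s0 S : (forall s, E s0 <= E s) ->
  replica_energy [ffun=> s0] <= replica_energy S.
Proof. by move=> s0_min; apply: ler_sum => k _; rewrite ffunE. Qed.

End Replicas.

Section MeasurableGibbs.
Variables (R : realType) (dT : measure_display) (T : measurableType dT).
Variables (C : finType) (E : T -> C -> R).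
Hypothesis E_measurable : forall s, measurable_fun setT (E ^~ s).
Implicit Types (b : R) (f g : T -> C -> R).

Lemma measurable_funV_gt0 (h : T -> R) : (forall w, 0 < h w) ->
  measurable_fun setT h -> measurable_fun setT (fun w => (h w)^-1).
Proof.
move=> h_gt0 mh.
have -> : (fun w => (h w)^-1) = expR \o (fun w => - ln (h w)).
  by apply/funext => w /=; rewrite expRN lnK ?posrE ?h_gt0.
apply: measurableT_comp; first exact: measurable_expR.
by apply: measurable_funN; apply: measurableT_comp mh; exact: measurable_ln.
Qed.

Lemma measurable_gibbs b f : (forall s, measurable_fun setT (f ^~ s)) ->
  measurable_fun setT (fun w => gibbs (E w) b (f w)).
Proof.
move=> f_measurable; apply: measurable_sum => s; apply: measurable_funM => //.
have m_exp t : measurable_fun setT (fun w => expR (- b * E w t)).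
  apply: measurableT_comp; first exact: measurable_expR.
  by apply: measurable_funM => //; exact: measurable_cst.
apply: measurable_funM => //; apply: measurable_funV_gt0.
  by move=> w; exact: partition_fun_gt0 s.
exact: measurable_sum.
Qed.

Lemma measurable_gibbs_cov b f g : (forall s, measurable_fun setT (f ^~ s)) ->
  (forall s, measurable_fun setT (g ^~ s)) ->
  measurable_fun setT (fun w => gibbs_cov (E w) b (f w) (g w)).
Proof.
move=> mf mg; apply: measurable_funB; last apply: measurable_funM;
  apply: measurable_gibbs => // s; exact: measurable_funM.
Qed.

End MeasurableGibbs.

Section QuenchedAverage.
Variables (R : realType) (dT : measure_display) (T : measurableType dT).
Variable P : probability T R.
Implicit Types (f : T -> R) (M : R).

Lemma AvE f : Av P f = \int[P]_(w in setT) f w.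
Proof. by rewrite /Av unlock. Qed.

Lemma integrable_bounded f M : measurable_fun setT f ->
  (forall w, `|f w| <= M) -> P.-integrable setT (EFin \o f).
Proof.
move=> mf f_le; apply: measurable_bounded_integrable => //.
  by rewrite -ge0_fin_numE // fin_num_measure.
exists M; split; first exact: num_real.
by move=> x M_lt_x w _; apply: le_trans (f_le w) (ltW M_lt_x).
Qed.

Lemma norm_Av_le f M : measurable_fun setT f ->
  (forall w, `|f w| <= M) -> `|Av P f| <= M.
Proof.
move=> mf f_le; have f_int := integrable_bounded mf f_le.
rewrite AvE; apply: le_trans (le_normr_Rintegral _ f_int) _ => //.
apply: le_trans (le_Rintegral (f2 := cst M) _ (integrable_norm f_int) _ _) _ => //.
- exact: finite_measure_integrable_cst.
- by move=> w _; exact: f_le.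
have P_setT : (P : {measure set T -> \bar R}) setT = 1%E := probability_setT P.
by rewrite Rintegral_cst // P_setT mulr1.
Qed.

Lemma Av_sum (I : Type) (r : seq I) (F : I -> T -> R) :
  (forall i, P.-integrable setT (EFin \o F i)) ->
  Av P (fun w => \sum_(i <- r) F i w) = \sum_(i <- r) Av P (F i).
Proof.
move=> F_int; rewrite AvE /Rintegral.
under eq_integral do rewrite -sumEFin.
rewrite integral_sum // (eq_bigr (fun i => (Av P (F i))%:E)) ?sumEFin // => i _.
by rewrite AvE /Rintegral fineK //; apply: integrable_fin_num => //; exact: F_int.
Qed.

End QuenchedAverage.

Section QuenchedFTC.
Variables (R : realType) (dT : measure_display) (T : measurableType dT).
Variables (P : probability T R) (F F' : R -> T -> R) (u v K : R).
Implicit Types (b : R) (w : T).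
Hypothesis F_integrable : forall b, u < b < v -> P.-integrable setT (EFin \o F b).
Hypothesis F'_measurable : forall b, measurable_fun setT (F' b).
Hypothesis F_derive : forall b w, is_derive b 1 (F ^~ w) (F' b w).
Hypothesis F'_continuous : forall w, continuous (F' ^~ w).
Hypothesis F'_bounded : forall b w, u < b < v -> `|F' b w| <= K.

Let I := `]u, v[%classic.

Let I_itv b : I b <-> u < b < v.
Proof. by rewrite /I /= in_itv. Qed.

Let F'_integrable b : I b -> P.-integrable setT (EFin \o F' b).
Proof.
move=> /I_itv Ib; apply: (integrable_bounded P (F'_measurable b)) => w.
exact: F'_bounded.
Qed.

Lemma is_derive_Av b : u < b < v -> is_derive b 1 (fun x => Av P (F x)) (Av P (F' b)).
Proof.
move=> Ib; have /I_itv Ib' := Ib.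
have F_der x w : I x -> setT w -> derivable (F ^~ w) x 1.
  by move=> _ _; case: (F_derive x w).
have K_int : P.-integrable setT (EFin \o cst K) by exact: finite_measure_integrable_cst.
have K_ge0 w : 0 <= cst K w := le_trans (normr_ge0 _) (F'_bounded w Ib).
have K_dom x w : I x -> setT w -> `|partial1of2 F x w| <= cst K w.
  move=> /I_itv Ix _; rewrite partial1of2E (@derive_val _ _ _ _ _ _ _ (F_derive x w)).
  exact: F'_bounded.
have F_int x : I x -> P.-integrable setT (EFin \o F x).
  by move=> /I_itv; exact: F_integrable.
under [fun x => Av P (F x)]funext do rewrite AvE.
apply: DeriveDef.
  exact: derivable_under_integral Ib' F_int F_der _ K_ge0 K_int K_dom.
rewrite -derive1E (differentiation_under_integral _ Ib' F_int F_der K_ge0 K_int K_dom) //.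
rewrite AvE; apply: eq_Rintegral => w _.
by rewrite partial1of2E (@derive_val _ _ _ _ _ _ _ (F_derive b w)).
Qed.

Lemma Av_continuous : {in I, continuous (fun b => Av P (F' b))}.
Proof.
under [fun b => Av P (F' b)]funext do rewrite AvE.
apply: (continuity_under_integral measurableT F'_integrable _
  (finite_measure_integrable_cst _ K measurableT)).
  by apply: aeW => w _ b _; exact: F'_continuous.
by move=> b /I_itv Ib; apply: aeW => w _; exact: F'_bounded.
Qed.

Lemma Rintegral_Av_derive b1 b2 : u < b1 -> b1 < b2 -> b2 < v ->
  \int[lebesgue_measure]_(b in `[b1, b2]) Av P (F' b) = Av P (F b2) - Av P (F b1).
Proof.
move=> ub1 b12 b2v.
have in_I b : b1 <= b <= b2 -> u < b < v.
  by case/andP=> b1b bb2; rewrite (lt_le_trans ub1 b1b) (le_lt_trans bb2 b2v).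
have in_I_oo b : b1 < b < b2 -> u < b < v.
  by case/andP=> b1b bb2; apply: in_I; rewrite !ltW.
have Av_F_continuous b : b1 <= b <= b2 -> {for b, continuous (fun x => Av P (F x))}.
  move=> /in_I Ib; have [Av_F_derivable _] := is_derive_Av Ib.
  exact/differentiable_continuous/derivable1_diffP.
have Av_F'_continuous : {within `[b1, b2], continuous (fun b => Av P (F' b))}.
  apply: continuous_in_subspaceT => b /set_mem; rewrite /= in_itv /= => /in_I Ib.
  by apply: Av_continuous; rewrite inE; apply/I_itv.
have Av_F_LR : derivable_oo_LRcontinuous (fun x => Av P (F x)) b1 b2.
  split.
  - by move=> b; rewrite in_itv /= => /in_I_oo Ib; have [] := is_derive_Av Ib.
  - by apply: cvg_at_right_filter; apply: Av_F_continuous; rewrite lexx ltW.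
  - by apply: cvg_at_left_filter; apply: Av_F_continuous; rewrite lexx ltW.
have Av_F_derive :
    {in `]b1, b2[, ((fun x => Av P (F x))^`())%classic =1 (fun b => Av P (F' b))}.
  move=> b; rewrite in_itv /= => /in_I_oo Ib.
  by have [_ <-] := is_derive_Av Ib; rewrite derive1E.
by rewrite /Rintegral (continuous_FTC2 b12 Av_F'_continuous Av_F_LR Av_F_derive) -EFinB.
Qed.

End QuenchedFTC.

Section FiniteVolume.
Variables (R : realType) (d : nat) (dT : measure_display) (T : measurableType dT).
Variables (P : probability T R) (J : {fset site d} -> T -> R).
Variables (Delta : {fset site d} -> R) (n : nat) (G : 'M[R]_n -> R).
Variables (a : 'I_d -> int) (L : 'I_d -> nat).
Hypothesis J_measurable : forall X, measurable_fun setT (J X).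
Hypothesis G_le1 : forall M, `|G M| <= 1.
Implicit Types (b : R) (w : T) (S : replicas n L).

Local Notation N := (#|box L|%:R : R).
Local Notation M := (#|{: replicas n L}|%:R : R).
Local Notation H w := (@Ham R T d a L J w).
Local Notation energy w := (@replica_energy R _ (H w) n).
Local Notation obs := (fun S => G (covmx a Delta S)).

Let config0 : config L := [ffun=> true].
Let replica0 : replicas n L := [ffun=> config0].

Let F b w := - (N^-1 * gibbs (energy w) b obs).
Let F' b w := N^-1 * gibbs_cov (energy w) b obs (energy w).

Lemma Omega_gibbs w b f : Omega a J w b f = gibbs (energy w) b f.
Proof.
rewrite /Omega /gibbs -(partition_fun_replica (H w)) mulr_suml.
by apply: eq_bigr => S _; rewrite mulrA.
Qed.

Lemma measurable_Ham (s : config L) : measurable_fun setT (fun w => H w s).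
Proof.
apply: measurable_funN; apply: measurable_sum => X.
by apply: measurable_funM => //; exact: measurable_cst.
Qed.

Lemma measurable_replica_energy S : measurable_fun setT (fun w => energy w S).
Proof. by apply: measurable_sum => k; exact: measurable_Ham. Qed.

Lemma norm_gibbs_cov_hdens_le w b l : 0 < b ->
  `|gibbs_cov (energy w) b (fun S => hdens a J w (S l)) obs| <= N^-1 * (2 * M / b).
Proof.
move=> b_gt0; have [s0 s0_min] := exists_ground_state (H w) config0.
have -> : (fun S => hdens a J w (S l)) = (fun S => N^-1 * H w (S l)).
  by apply/funext => S; rewrite /hdens mulrC.
rewrite gibbs_covZl normrM ger0_norm ?invr_ge0 // ler_wpM2l ?invr_ge0 //.
apply: (norm_gibbs_cov_excess_le (s0 := [ffun=> s0]) (c := H w s0) b_gt0) => // S.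
exact: replica_energy_excess.
Qed.

Lemma Delta1E b : 0 < b -> Delta1 P J Delta G a L b = Av P (F' b).
Proof.
move=> b_gt0.
pose g l w := gibbs_cov (energy w) b (fun S => hdens a J w (S l)) obs.
transitivity (\sum_(l < n) Av P (g l)).
  by apply: eq_bigr => l _; congr (Av P _); apply/funext => w; rewrite !Omega_gibbs.
rewrite -Av_sum => [|l].
  congr (Av P _); apply/funext => w; rewrite /g -gibbs_cov_suml.
  have -> : (fun S => \sum_(l < n) hdens a J w (S l)) = (fun S => N^-1 * energy w S).
    apply/funext => S; rewrite /replica_energy mulr_sumr.
    by apply: eq_bigr => l _; rewrite /hdens mulrC.
  by rewrite gibbs_covZl gibbs_covC.
apply: (integrable_bounded P _ (fun w => norm_gibbs_cov_hdens_le w l b_gt0)).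
apply: measurable_gibbs_cov => S; first exact: measurable_replica_energy.
  by apply: measurable_funM; [exact: measurable_Ham | exact: measurable_cst].
exact: measurable_cst.
Qed.

Lemma measurable_F b : measurable_fun setT (F b).
Proof.
apply: measurable_funN; apply: measurable_funM; first exact: measurable_cst.
apply: measurable_gibbs => S; first exact: measurable_replica_energy.
exact: measurable_cst.
Qed.

Lemma norm_F_le b w : `|F b w| <= N^-1.
Proof.
rewrite normrN normrM ger0_norm ?invr_ge0 // ler_piMr ?invr_ge0 //.
by apply: (gibbs_norm_le1 _ _ replica0) => S.
Qed.

Lemma measurable_F' b : measurable_fun setT (F' b).
Proof.
apply: measurable_funM; first exact: measurable_cst.
by apply: measurable_gibbs_cov => S; first exact: measurable_replica_energy;
  [exact: measurable_cst | exact: measurable_replica_energy].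
Qed.

Lemma is_derive_F b w : is_derive b 1 (F ^~ w) (F' b w).
Proof.
apply: is_derive_eq (is_deriveN (is_deriveZ N^-1 (is_derive_gibbs _ b obs))) _.
by rewrite /F' /GRing.scale /= mulrN opprK.
Qed.

Lemma continuous_F' w : continuous (F' ^~ w).
Proof.
have -> : F' ^~ w = cst N^-1 \* (fun b => gibbs_cov (energy w) b obs (energy w)) by [].
by move=> b; apply: continuousM; [exact: cst_continuous | exact: gibbs_cov_continuous].
Qed.

Lemma norm_F'_le b w : 0 < b -> `|F' b w| <= N^-1 * (2 * M / b).
Proof.
move=> b_gt0; have [s0 s0_min] := exists_ground_state (H w) config0.
rewrite normrM ger0_norm ?invr_ge0 // ler_wpM2l ?invr_ge0 // gibbs_covC.
apply: (norm_gibbs_cov_excess_le (s0 := [ffun=> s0]) (c := energy w [ffun=> s0]) b_gt0)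
  => // S.
by rewrite lexx subr_ge0 replica_energy_ground.
Qed.

Lemma norm_Rintegral_Delta1_le b1 b2 : 0 < b1 -> b1 < b2 ->
  `|\int[lebesgue_measure]_(b in `[b1, b2]) Delta1 P J Delta G a L b| <= 2 / N.
Proof.
move=> b1_gt0 b12.
have -> : \int[lebesgue_measure]_(b in `[b1, b2]) Delta1 P J Delta G a L b =
          \int[lebesgue_measure]_(b in `[b1, b2]) Av P (F' b).
  apply: eq_Rintegral => b; rewrite inE /= in_itv /= => /andP[b1b _].
  by apply: Delta1E; exact: lt_le_trans b1b.
have F_integrable b : b1 / 2 < b < b2 + 1 -> P.-integrable setT (EFin \o F b).
  by move=> _; have := integrable_bounded P (measurable_F b) (norm_F_le b).
have F'_bounded b w : b1 / 2 < b < b2 + 1 -> `|F' b w| <= N^-1 * (2 * M / (b1 / 2)).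
  case/andP=> b1b _; have b_gt0 : 0 < b by apply: lt_trans b1b; lra.
  apply: le_trans (norm_F'_le w b_gt0) _.
  by rewrite !ler_wpM2l ?invr_ge0 ?mulr_ge0 // lef_pV2 ?posrE ?ltW //; lra.
rewrite (Rintegral_Av_derive F_integrable measurable_F' is_derive_F continuous_F'
  F'_bounded) ?b12 //; try lra.
have := norm_Av_le P (measurable_F b2) (norm_F_le b2).
have := norm_Av_le P (measurable_F b1) (norm_F_le b1).
have := ler_normB (Av P (F b2)) (Av P (F b1)).
lra.
Qed.

End FiniteVolume.

Lemma inv_natr_cvg0 (R : realType) (u : nat -> nat) :
  (forall M, \forall k \near \oo, (M <= u k)%N) ->
  (fun k => (u k)%:R^-1 : R) @ \oo --> 0.
Proof.
move=> u_large; apply/(gtr0_cvgV0 (f := fun k => (u k)%:R)).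
  by apply: filterS (u_large 1%N) => k; rewrite ltr0n.
apply/cvgryPge => A; apply: filterS (u_large (Num.Def.archi_bound `|A|)) => k.
rewrite -(ler_nat R); apply: le_trans; apply: le_trans (ler_norm A) (ltW _).
exact/archi_boundP.
Qed.

Theorem lemma1 (R : realType) (d : nat)
  (dT : measure_display) (T : measurableType dT) (P : probability T R)
  (J : {fset site d} -> T -> R) (Delta : {fset site d} -> R)
  (Delta_ge0 : forall X, 0 <= Delta X)
  (J_gauss : forall X, centered_gaussian P (J X) (Delta X))
  (J_indep : mutually_independent P J)
  (Delta_transl : forall (v : site d) (X : {fset site d}),
      Delta (translate v X) = Delta X)
  (stability : exists cbar : R, forall (a : 'I_d -> int) (L : 'I_d -> nat)
      (s : config L), cov a Delta s s <= cbar)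
  (n : nat) (n_ge1 : (0 < n)%N) (G : 'M[R]_n -> R) (G_obs : observable G)
  (beta1 beta2 : R) (beta1_gt0 : 0 < beta1) (beta12 : beta1 < beta2)
  (a : nat -> 'I_d -> int) (L : nat -> 'I_d -> nat)
  (L_large : forall M : nat, \forall k \near \oo, (M <= #|box (L k)|)%N) :
  (fun k => Rintegral lebesgue_measure `[beta1, beta2]
              (fun beta => Delta1 P J Delta G (a k) (L k) beta))
    @ \oo --> 0.
Proof.
have J_measurable X : measurable_fun setT (J X) := (J_gauss X).1.
have bound k := norm_Rintegral_Delta1_le P Delta (a k) (L k) J_measurable G_obs.2
  beta1_gt0 beta12.
have inv_N_cvg0 := inv_natr_cvg0 (R := R) L_large.
apply: (@squeeze_cvgr _ _ _ _ (fun k => - (2 * #|box (L k)|%:R^-1))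
                              (fun k => 2 * #|box (L k)|%:R^-1)).
- by apply: nearW => k; rewrite -ler_norml; exact: bound.
- by rewrite -oppr0 -(mulr0 2); apply: cvgN; apply: cvgM => //; exact: cvg_cst.
- by rewrite -(mulr0 2); apply: cvgM => //; exact: cvg_cst.
Qed.
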